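(* Let $M$ be a Maya diagram with partition $\lambda\neq\emptyset$, and let $D$ be the set of critical degrees of $M$. Then: (i) if $q_1,q_2\in D$ then $q_1+q_2\in D$; (ii) with $q_c=\lambda_1+\ell$, where $\ell$ is the length of $\lambda$, every integer $q\ge q_c$ belongs to $D$, while $q_c-1\notin D$. Moreover $D$ depends only on $\lambda$ (i.e. $M$ and $M+n$ have the same critical degrees for all $n\in\mathbb{Z}$).
   Context: A Maya diagram is a set $M\subset\mathbb{Z}$ such that $K_M^+=\{m\in M: m\ge 0\}$ and $K_M^-=\{m\in\mathbb{Z}\setminus M: m<0\}$ are finite; its index is $\sigma_M=\#K_M^+-\#K_M^-$, and $M+n=\{m+n:m\in M\}$. For a partition $\lambda$ (non-increasing non-negative integer sequence, eventually $0$; length $\ell$ = number of nonzero parts) let $M^{(\lambda)}=\{\lambda_i-i:i\ge1\}$; every Maya diagram equals $M^{(\lambda)}+\sigma_M$ for a unique partition $\lambda$, called the partition of $M$. A positive integer $q$ is a critical degree of $M$ ($M$ is a $q$-core) if $M\subset M+q$. *)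

From mathcomp Require Import all_boot all_order all_algebra.
Set Implicit Arguments. Unset Strict Implicit. Unset Printing Implicit Defensive.
Import Order.TTheory GRing.Theory Num.Theory.
Local Open Scope ring_scope.

Definition intset := int -> Prop.

Definition Kplus (M : intset) (m : int) : Prop := M m /\ 0 <= m.
Definition Kminus (M : intset) (m : int) : Prop := ~ M m /\ m < 0.

Definition enumerates (A : intset) (s : seq int) : Prop :=
  uniq s /\ forall m, A m <-> m \in s.

Definition finite_intset (A : intset) : Prop := exists s, enumerates A s.

Definition is_maya (M : intset) : Prop :=
  finite_intset (Kplus M) /\ finite_intset (Kminus M).

Definition maya_index (M : intset) (sigma : int) : Prop :=
  exists sp sm, enumerates (Kplus M) sp /\ enumerates (Kminus M) sm /\
    sigma = (size sp)%:Z - (size sm)%:Z.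

Definition shift (M : intset) (n : int) : intset := fun x => exists2 m, M m & x = m + n.

(* Partitions: non-increasing sequences of positive parts (trailing zeros
   omitted); lambda_i (i >= 1) is nth 0 lambda (i-1), length = size lambda. *)
Definition is_partition (lam : seq nat) : Prop :=
  sorted (fun a b => (b <= a)%N) lam /\ all (fun a => (0 < a)%N) lam.

Definition part (lam : seq nat) (i : nat) : nat := nth 0%N lam i.-1.

Definition maya_of_partition (lam : seq nat) : intset :=
  fun x => exists2 i : nat, (1 <= i)%N & x = (part lam i)%:Z - i%:Z.

Definition partition_of (M : intset) (lam : seq nat) : Prop :=
  is_partition lam /\
  exists sigma, maya_index M sigma /\
    forall x, M x <-> shift (maya_of_partition lam) sigma x.

Definition critical_degree (M : intset) (q : int) : Prop :=
  0 < q /\ forall m, M m -> shift M q m.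

(* Writing "q is critical for A" for 0 < q and A - q ⊆ A, i.e. A ⊆ A + q, the
   proof rests on three elementary observations valid for any A ⊆ Z:
   - critical degrees are closed under addition, since A - q1 - q2 ⊆ A - q2 ⊆ A;
   - they are invariant under translation A ↦ A + n, hence depend only on the
     partition λ of a Maya diagram M = M^(λ) + σ_M;
   - if (-∞, l] ⊆ A ⊆ (-∞, u], then every q ≥ u - l is critical, and if
     moreover u ∈ A and l + 1 ∉ A, then u - l - 1 is not.
   For A = M^(λ) = {λ_i - i : i ≥ 1} one has u = λ_1 - 1 (attained at i = 1)
   and l = -ℓ - 1 (the indices i > ℓ give all of (-∞, -ℓ-1]), while
   -ℓ ∉ M^(λ) because the parts λ_1, ..., λ_ℓ are positive.  Hence
   u - l = λ_1 + ℓ = q_c, which gives the theorem. *)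
From mathcomp Require Import all_boot all_order all_algebra.
From mathcomp Require Import zify.
Import Order.TTheory GRing.Theory Num.Theory.
Local Open Scope ring_scope.

Lemma shiftE (A : intset) (n x : int) : shift A n x <-> A (x - n).
Proof.
split; first by case=> m Am ->; rewrite addrK.
by move=> Ax; exists (x - n) => //; rewrite subrK.
Qed.

Lemma critical_degreeE (A : intset) (q : int) :
  critical_degree A q <-> 0 < q /\ forall m, A m -> A (m - q).
Proof.
split=> -[q_gt0 HA]; split=> // m /HA; by rewrite shiftE.
Qed.

Lemma critical_degree_add (A : intset) (q1 q2 : int) :
  critical_degree A q1 -> critical_degree A q2 -> critical_degree A (q1 + q2).
Proof.
move=> /critical_degreeE [q1_gt0 H1] /critical_degreeE [q2_gt0 H2].
apply/critical_degreeE; split; first exact: addr_gt0.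
by move=> m /H1 /H2; rewrite opprD addrA.
Qed.

Lemma critical_degree_ext (A B : intset) (q : int) :
  (forall x, A x <-> B x) -> critical_degree A q <-> critical_degree B q.
Proof.
move=> AB; rewrite !critical_degreeE.
by split=> -[q_gt0 H]; split=> // m /AB /H /AB.
Qed.

Lemma critical_degree_shift (A : intset) (n q : int) :
  critical_degree (shift A n) q <-> critical_degree A q.
Proof.
rewrite !critical_degreeE; split=> -[q_gt0 H]; split=> // m.
  move=> Am; have /H : shift A n (m + n) by apply/shiftE; rewrite addrK.
  by rewrite shiftE addrAC addrK.
by rewrite !shiftE addrAC; exact: H.
Qed.

Section Sandwich.
Variables (A : intset) (l u : int).
Hypothesis A_low : forall x, x <= l -> A x.
Hypothesis A_up : forall x, A x -> x <= u.

(* Every q ≥ u - l (and positive) shifts A into the lower ray, inside A. *)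
Lemma critical_degree_large (q : int) :
  0 < q -> u - l <= q -> critical_degree A q.
Proof.
move=> q_gt0 hq; apply/critical_degreeE; split=> // m /A_up hm.
apply: A_low; lia.
Qed.

(* If u ∈ A but l + 1 ∉ A, the degree u - l - 1 would move u onto l + 1. *)
Lemma not_critical_degree_gap :
  A u -> ~ A (l + 1) -> ~ critical_degree A (u - l - 1).
Proof.
move=> Au Al1 /critical_degreeE [_ H]; apply: Al1.
by have := H u Au; congr A; lia.
Qed.
End Sandwich.

Section MayaOfPartition.
Variable lam : seq nat.

Lemma part_big (i : nat) : (size lam < i)%N -> part lam i = 0%N.
Proof. by case: i => [|i] // hi; rewrite /part nth_default. Qed.

(* (-∞, -ℓ - 1] ⊆ M^(λ), using the indices i > ℓ. *)
Lemma maya_of_partition_low (x : int) :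
  x <= - (size lam)%:Z - 1 -> maya_of_partition lam x.
Proof. by move=> hx; exists `|x|%N; [lia | rewrite part_big; lia]. Qed.

Lemma maya_of_partition_top : maya_of_partition lam ((part lam 1)%:Z - 1).
Proof. by exists 1%N. Qed.

Hypothesis lam_part : is_partition lam.

Lemma part_pos (i : nat) : (1 <= i)%N -> (i <= size lam)%N -> (0 < part lam i)%N.
Proof.
case: lam_part => _ lam_pos i_ge1 i_le; rewrite /part.
apply: (allP lam_pos); apply: mem_nth; by case: i i_ge1 i_le.
Qed.

(* -ℓ ∉ M^(λ): for i ≤ ℓ the part is positive, for i > ℓ the value is -i. *)
Lemma maya_of_partition_hole : ~ maya_of_partition lam (- (size lam)%:Z).
Proof.
case=> i i_ge1 e; case: (ltnP (size lam) i) => hi.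
  by rewrite part_big // in e; lia.
by have := @part_pos i i_ge1 hi; lia.
Qed.

Hypothesis lam_ne : lam != [::].

Lemma part_le1 (i : nat) : (part lam i <= part lam 1)%N.
Proof.
case: lam_part => lam_sorted _; rewrite /part /=.
case: (ltnP i.-1 (size lam)) => hi; last by rewrite nth_default.
have geq_trans : transitive (fun a b : nat => (b <= a)%N).
  by move=> a b c h1 h2; exact: leq_trans h2 h1.
apply: (sorted_leq_nth geq_trans (fun a => leqnn a) 0%N lam_sorted) => //.
by rewrite inE; case: (lam) lam_ne.
Qed.

Lemma maya_of_partition_up (x : int) :
  maya_of_partition lam x -> x <= (part lam 1)%:Z - 1.
Proof. by case=> i i_ge1 ->; have := part_le1 i; lia. Qed.
End MayaOfPartition.

Theorem mainTheorem5 (M : intset) (lam : seq nat) :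
  is_maya M -> partition_of M lam -> lam != [::] ->
  (forall q1 q2, critical_degree M q1 -> critical_degree M q2 ->
                 critical_degree M (q1 + q2))
  /\ (forall q : int, ((part lam 1 + size lam)%N)%:Z <= q -> critical_degree M q)
  /\ ~ critical_degree M (((part lam 1 + size lam)%N)%:Z - 1)
  /\ (forall (n q : int), critical_degree M q <-> critical_degree (shift M n) q).
Proof.
move=> _ [lam_part [sigma [_ M_def]]] lam_ne.
pose N := maya_of_partition lam.
have M_N q : critical_degree M q <-> critical_degree N q.
  by rewrite (critical_degree_ext _ _ q M_def) critical_degree_shift.
have N_low := @maya_of_partition_low lam.
have N_up := @maya_of_partition_up lam lam_part lam_ne.
split; first exact: critical_degree_add.
split.
  have size_gt0 : (0 < size lam)%N by case: (lam) lam_ne.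
  move=> q hq; apply/M_N; apply: (@critical_degree_large N _ _ N_low N_up); lia.
split.
  move/M_N; rewrite (_ : _ - 1 = (part lam 1)%:Z - 1 - (- (size lam)%:Z - 1) - 1);
    last lia.
  apply: (@not_critical_degree_gap N _ _ (maya_of_partition_top lam)).
  by rewrite subrK; exact: maya_of_partition_hole.
by move=> n q; rewrite critical_degree_shift.
Qed.
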